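(* Let $n\ge 2$ and $m\ge 2$ be integers. Let $M_1=(\mu_{ij})$ be the $n\times n$ $0/1$ matrix with $\mu_{1,n-1}=\mu_{1,n}=1$, $\mu_{i,i-1}=1$ for $2\le i\le n$, and all other entries $0$, and let $\mathbb{A}_0$ be the order $m$, dimension $n$ tensor with $(\mathbb{A}_0)_{ij\ldots j}=\mu_{ij}$ for all $i,j\in[n]$ and $(\mathbb{A}_0)_{ii_2\ldots i_m}=0$ whenever $i_2,\ldots,i_m$ are not all equal. Then: (i) if $k$ is an integer with $1\le k\le n^2-3n+2$ and $k=(n-1)q+r$ with $q\ge0$, $1\le r\le n-1$, then $S_k(\mathbb{A}_0,n-1)=\{r-q-1,\ldots,r-1,r\}\pmod n$ and $|S_k(\mathbb{A}_0,n-1)|=q+2$; (ii) for every positive integer $t$ and every $j\in\{1,\ldots,n-2\}$, $S_{t+(n-1-j)}(\mathbb{A}_0,j)=S_t(\mathbb{A}_0,n-1)$, and also $S_{t+n-1}(\mathbb{A}_0,n)=S_t(\mathbb{A}_0,n-1)$.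
   Context: For an integer $a$, $|a|_n$ denotes the least positive integer congruent to $a$ modulo $n$, and $\{a_1,\ldots,a_s\}\pmod n$ means $\{|a_1|_n,\ldots,|a_s|_n\}$. General product of tensors of dimension $n$: for $\mathbb{A}$ of order $m\ge2$ and $\mathbb{B}$ of order $k\ge1$, $(\mathbb{A}\mathbb{B})_{i\alpha_1\ldots\alpha_{m-1}}=\sum_{i_2,\ldots,i_m=1}^n a_{ii_2\ldots i_m}b_{i_2\alpha_1}\cdots b_{i_m\alpha_{m-1}}$ ($\alpha_l\in[n]^{k-1}$), a tensor of order $(m-1)(k-1)+1$; it is associative and $\mathbb{A}^k$ is the $k$-fold power. The majorization matrix of a tensor $\mathbb{C}$ is $(M(\mathbb{C}))_{ij}=c_{ij\ldots j}$. For a nonnegative tensor $\mathbb{A}$, $j\in[n]$ and $k\ge1$, $S_k(\mathbb{A},j)=\{u\in[n]\mid (M(\mathbb{A}^k))_{uj}>0\}$. *)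

From mathcomp Require Import all_boot all_order all_algebra.
Set Implicit Arguments. Unset Strict Implicit. Unset Printing Implicit Defensive.
Import Order.TTheory GRing.Theory Num.Theory.
Local Open Scope ring_scope.

(* Index i : 'I_n stands for the paper's label i.+1 in [n] = {1,...,n}.
   A tensor of order p is only ever evaluated on sequences of length p. *)
Definition tensor (R : Type) (n : nat) := seq 'I_n -> R.

(* General product of A (order m) and B (order k):
   (AB)_{i alpha_1 ... alpha_{m-1}} =
     sum_{i_2..i_m} a_{i i_2 .. i_m} b_{i_2 alpha_1} ... b_{i_m alpha_{m-1}},
   alpha_l being the l-th block of length k-1 of the remaining indices. *)
Definition tprod (R : numDomainType) (n m k : nat) (A B : tensor R n) : tensor R n :=
  fun s => match s with
  | [::] => 0
  | i :: rest =>
      \sum_(t : (m.-1).-tuple 'I_n)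
        A (i :: (t : seq 'I_n)) *
        \prod_(l < m.-1) B (tnth t l :: take k.-1 (drop (l * k.-1) rest))
  end.

(* k-fold power: A^1 = A, A^(k+1) = A (A^k); A^k has order (m-1)^k + 1. *)
Fixpoint tpow (R : numDomainType) (n m : nat) (A : tensor R n) (k : nat) : tensor R n :=
  match k with
  | k'.+1 => if k' is 0 then A
             else tprod m ((m.-1) ^ k').+1 A (tpow m A k')
  | 0 => A
  end.

Definition majmx (R : numDomainType) (n p : nat) (C : tensor R n) (i j : 'I_n) : R :=
  C (i :: nseq p.-1 j).

Definition Sk (R : numDomainType) (n m : nat) (A : tensor R n) (k : nat) (j : 'I_n)
  : {set 'I_n} :=
  [set u : 'I_n | 0 < majmx ((m.-1) ^ k).+1 (tpow m A k) u j].

(* |a|_n : least positive integer congruent to a modulo n (n > 0) *)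
Definition modpos (n : nat) (a : int) : nat := (`|((a - 1) %% n)%Z|%N).+1.

Definition mu1 (n : nat) (i j : 'I_n) : bool :=
  ((i.+1 == 1)%N && ((j.+1 == n.-1)%N || (j.+1 == n)%N))
  || ((2 <= i.+1)%N && (j.+1 == i.+1 - 1)%N).

Definition A0 (R : numDomainType) (n m : nat) : tensor R n :=
  fun s => match s with
  | i :: j :: rest =>
      if (size s == m) && all (fun x => x == j) rest then (mu1 i j)%:R else 0
  | _ => 0
  end.

From mathcomp Require Import all_boot all_order all_algebra zify.
Import Order.TTheory GRing.Theory Num.Theory.

(* Since A_0 is nonnegative and its only nonzero entries are (A_0)_{i j...j} = mu_{ij},
   expanding M(A_0^(k+1))_{ij} over the tuples (i_2, ..., i_m) leaves only the constant
   tuples (w, ..., w) with mu_{iw} = 1, each weighted by M(A_0^k)_{wj}.  Hence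
   M(A_0^k)_{uj} > 0 iff the digraph of M_1 has a walk of length k from u to j.
   In that digraph every vertex u >= 2 has the single successor u - 1, and 1 has the
   successors n - 1 and n.  So the set of vertices reaching n - 1 in k steps rotates
   by one place at each step and gains one vertex every n - 1 steps, which yields the
   window {r-q-1, ..., r} mod n.  For (ii), a vertex j <= n - 2 has the single
   predecessor j + 1 and n has the single predecessor 1, so walks ending there are
   walks ending at n - 1 followed by a forced path. *)

Set Implicit Arguments.
Unset Strict Implicit.
Unset Printing Implicit Defensive.

Section Walks.
Variables (T : finType) (e : rel T).

Fixpoint walk (k : nat) (u v : T) : bool :=
  if k is k'.+1 then [exists w, e u w && walk k' w v] else u == v.

Lemma walkS k u v : walk k.+1 u v = [exists w, e u w && walk k w v].
Proof. by []. Qed.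

Lemma walk1 u v : walk 1 u v = e u v.
Proof.
apply/existsP/idP => [[w /andP[euw /eqP <-]] // | euv].
by exists v; rewrite euv eqxx.
Qed.

Lemma walkSr k u v : walk k.+1 u v = [exists w, walk k u w && e w v].
Proof.
elim: k u => [|k IHk] u.
  apply/existsP/existsP => [[w /andP[euw /eqP <-]]|[w /andP[/eqP <- euw]]].
    by exists u; rewrite /= eqxx.
  by exists v; rewrite /= eqxx andbT.
rewrite walkS; apply/existsP/existsP => [[w /andP[euw]]|[w /andP[/existsP[x /andP[eux xw] ewv]]]].
  by rewrite IHk => /existsP[x /andP[wx exv]]; exists x; rewrite exv andbT;
     apply/existsP; exists w; rewrite euw.
by exists x; rewrite eux IHk; apply/existsP; exists w; apply/andP.
Qed.

Lemma walkS_succ k u v s :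
  (forall w, e u w = (w == s)) -> walk k.+1 u v = walk k s v.
Proof.
move=> succE; rewrite walkS; apply/existsP/idP => [[w]|skv].
  by rewrite succE => /andP[/eqP -> ].
by exists s; rewrite succE eqxx.
Qed.

Lemma walkS_succ2 k u v s1 s2 :
  (forall w, e u w = (w == s1) || (w == s2)) ->
  walk k.+1 u v = walk k s1 v || walk k s2 v.
Proof.
move=> succE; rewrite walkS; apply/existsP/orP => [[w]|[s1kv|s2kv]].
- by rewrite succE => /andP[/orP[] /eqP -> ]; [left|right].
- by exists s1; rewrite succE eqxx.
- by exists s2; rewrite succE eqxx orbT.
Qed.

Lemma walkSr_pred k u v p :
  (forall w, e w v = (w == p)) -> walk k.+1 u v = walk k u p.
Proof.
move=> predE; rewrite walkSr; apply/existsP/idP => [[w]|ukp].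
  by rewrite predE => /andP[ukw /eqP <-].
by exists p; rewrite ukp predE eqxx.
Qed.

End Walks.

(* [x] (0-based) is congruent to one of [r-1, r-2, ..., r-q-2] modulo [N]. *)
Definition cyc_window (N q r x : nat) : bool :=
  (x < r <= x + q.+2) || (r + N <= x + q.+2).

Section CycleGraph.
Variable n' : nat.
Local Notation N := n'.+2.

Lemma mu1E (u w : 'I_N) : mu1 u w =
  if 0 < u then w.+1 == u else (w == n' :> nat) || (w == n'.+1 :> nat).
Proof. by rewrite /mu1; case: ifP; lia. Qed.

Lemma walk_mu1S k (u v : 'I_N) : walk (@mu1 N) k.+1 u v =
  if 0 < u then walk (@mu1 N) k (inord u.-1) v
  else walk (@mu1 N) k (inord n') v || walk (@mu1 N) k (inord n'.+1) v.
Proof.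
have u_lt := ltn_ord u.
case: ifP => u_gt0; [apply: walkS_succ | apply: walkS_succ2] => w;
  by rewrite mu1E u_gt0 -!val_eqE /= !inordK //; lia.
Qed.

Lemma walk_mu1Sr k (u v : 'I_N) :
  v < n' -> walk (@mu1 N) k.+1 u v = walk (@mu1 N) k u (inord v.+1).
Proof.
move=> v_lt; apply: walkSr_pred => w.
by rewrite mu1E -val_eqE /= inordK; [case: ifP; lia | lia].
Qed.

Definition reaches_penult (k x : nat) : bool :=
  walk (@mu1 N) k (inord x) (inord n').

Lemma reaches_penult0 x : x < N -> reaches_penult 0 x = (x == n').
Proof. by move=> x_lt; rewrite /reaches_penult /= -val_eqE /= !inordK. Qed.

Lemma reaches_penultS k x : x < N -> reaches_penult k.+1 x =
  if 0 < x then reaches_penult k x.-1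
  else reaches_penult k n' || reaches_penult k n'.+1.
Proof. by move=> x_lt; rewrite /reaches_penult walk_mu1S inordK. Qed.

Lemma reaches_penult_window_from1 q : q.+2 < N ->
  (forall x, x < N -> reaches_penult (n'.+1 * q).+1 x = cyc_window N q 1 x) ->
  forall r x, 0 < r < N -> x < N ->
  reaches_penult (n'.+1 * q + r) x = cyc_window N q r x.
Proof.
move=> q_lt base; elim=> [|[|r] IHr] // x r_bd x_lt; first by rewrite addn1 base.
rewrite addnS reaches_penultS //; case: ifP => x_gt0; rewrite !IHr /cyc_window //; lia.
Qed.

Lemma reaches_penult_window q r x : q.+2 < N -> 0 < r < N -> x < N ->
  reaches_penult (n'.+1 * q + r) x = cyc_window N q r x.
Proof.
elim: q r x => [|q IHq] r x q_lt; apply: reaches_penult_window_from1 => // {}x x_lt.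
  rewrite muln0 reaches_penultS //; case: ifP => x_gt0;
    by rewrite !reaches_penult0 /cyc_window //; lia.
rewrite mulnS addnC reaches_penultS //; case: ifP => x_gt0;
  by rewrite !IHq /cyc_window //; lia.
Qed.

Lemma walk_mu1Sr_last k (u : 'I_N) :
  walk (@mu1 N) k.+1 u (inord n'.+1) = walk (@mu1 N) k u (inord 0).
Proof.
apply: walkSr_pred => w; have := ltn_ord w.
by rewrite mu1E -val_eqE /= !inordK //; case: ifP; lia.
Qed.

Lemma walk_mu1_shift t d (u j : 'I_N) :
  j + d = n' -> walk (@mu1 N) (t + d) u j = walk (@mu1 N) t u (inord n').
Proof.
elim: d j => [|d IHd] j jd.
  by rewrite addn0; congr walk; apply/val_inj; rewrite /= inordK; lia.
by rewrite addnS walk_mu1Sr ?IHd // ?inordK; lia.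
Qed.

End CycleGraph.

Local Open Scope ring_scope.

Section DiagonalTensor.
Variables (R : realDomainType) (n m : nat) (e : rel 'I_n).
Hypothesis m_gt1 : (1 < m)%N.

Definition diag_tensor : tensor R n :=
  fun s => match s with
  | i :: j :: rest =>
      if (size s == m) && all (fun x => x == j) rest then (e i j)%:R else 0
  | _ => 0
  end.

Local Notation M k := (majmx ((m.-1) ^ k).+1 (tpow m diag_tensor k)).

Lemma diag_tensor_ge0 s : 0 <= diag_tensor s.
Proof. by case: s => [|i [|j s]] //=; case: ifP. Qed.

Lemma diag_tensor_nseq i j : diag_tensor (i :: nseq m.-1 j) = (e i j)%:R.
Proof.
have -> : m.-1 = m.-2.+1 by lia.
by rewrite /= size_nseq all_nseq eqxx orbT (_ : m.-2.+2 = m) ?eqxx //; lia.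
Qed.

Lemma diag_tensor_gt0 i j s : 0 < diag_tensor (i :: j :: s) -> e i j.
Proof. by rewrite /=; case: ifP => _; case: (e i j); rewrite ?ltxx. Qed.

Lemma majmx_tpow1 i j : M 1 i j = (e i j)%:R.
Proof. by rewrite /majmx expn1; apply: diag_tensor_nseq. Qed.

Lemma majmx_tpowSS k i j : M k.+2 i j =
  \sum_(t : (m.-1).-tuple 'I_n)
     diag_tensor (i :: (t : seq 'I_n)) * \prod_(l < m.-1) M k.+1 (tnth t l) j.
Proof.
rewrite /majmx /=; apply: eq_bigr => t _; congr (_ * _).
apply: eq_bigr => l _; rewrite drop_nseq take_nseq //.
by rewrite (expnS _ k.+1) -mulnBl leq_pmull // subn_gt0.
Qed.

Lemma majmx_tpow_ge0 k i j : 0 <= M k i j.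
Proof.
elim: k i => [|[|k] IHk] i; rewrite ?majmx_tpowSS; try exact: diag_tensor_ge0.
by apply: sumr_ge0 => t _; rewrite mulr_ge0 ?diag_tensor_ge0 ?prodr_ge0.
Qed.

Lemma majmx_tpow_gt0 k i j : (0 < k)%N -> (0 < M k i j) = walk e k i j.
Proof.
have m1_gt0 : (0 < m.-1)%N by case: m m_gt1 => [|[|]].
elim: k i => [|[|k] IHk] // i _.
  by rewrite majmx_tpow1 walk1; case: (e i j); rewrite ?ltr01 ?ltxx.
have term_ge0 (t : (m.-1).-tuple 'I_n) :
    0 <= diag_tensor (i :: (t : seq _)) * \prod_(l < m.-1) M k.+1 (tnth t l) j.
  by rewrite mulr_ge0 ?diag_tensor_ge0 ?prodr_ge0 // => l _; apply: majmx_tpow_ge0.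
rewrite majmx_tpowSS walkS; apply/idP/existsP => [pos_sum|[w /andP[eiw wj]]].
  have [t /andP[_ pos_t]] := psumr_neq0P (fun t _ => term_ge0 t) (elimF eqP (gt_eqF pos_sum)).
  have diag_gt0 : 0 < diag_tensor (i :: (t : seq _)).
    by rewrite lt0r diag_tensor_ge0 andbT; apply: contraTneq pos_t => ->; rewrite mul0r ltxx.
  have prod_neq0 : \prod_(l < m.-1) M k.+1 (tnth t l) j != 0.
    by apply: contraTneq pos_t => ->; rewrite mulr0 ltxx.
  exists (nth j t 0); rewrite -IHk //; apply/andP; split.
    case: t {pos_t prod_neq0} diag_gt0 => [[|x s] sz] //=.
      by rewrite -(eqP sz) in m1_gt0.
    exact: diag_tensor_gt0.
  rewrite lt0r majmx_tpow_ge0 andbT.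
  by move/prodf_neq0: prod_neq0 => /(_ (Ordinal m1_gt0) isT); rewrite (tnth_nth j).
rewrite (bigD1 [tuple of nseq m.-1 w]) // ltr_wpDr ?sumr_ge0 //.
rewrite (diag_tensor_nseq i w) eiw mul1r prodr_gt0 // => l _.
by rewrite tnth_nseq IHk.
Qed.

Lemma Sk_diag_tensor k j :
  (0 < k)%N -> Sk m diag_tensor k j = [set u | walk e k u j].
Proof. by move=> k_gt0; apply/setP => u; rewrite !inE majmx_tpow_gt0. Qed.

End DiagonalTensor.


Lemma modpos_subn N r d : (0 < r < N)%N -> (d < N)%N ->
  modpos N (r%:Z - d%:Z) = if (d < r)%N then (r - d)%N else (r + N - d)%N.
Proof.
move=> r_bd d_lt; rewrite /modpos; case: ifP => d_lt_r.
  rewrite (_ : _ - 1 = (r - d).-1%:Z); last lia.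
  by rewrite modz_nat absz_nat modn_small; lia.
rewrite (_ : _ - 1 = (r + N - d).-1%:Z - N%:Z); last lia.
by rewrite -(modzDr _ N%:Z) subrK modz_nat absz_nat modn_small; lia.
Qed.

Definition res_window (N q r : nat) : {set 'I_N} :=
  [set u : 'I_N | [exists d : 'I_q.+2, u.+1 == modpos N (r%:Z - (d : nat)%:Z)]].

Section ResidueWindow.
Variables (n' q r : nat).
Local Notation N := n'.+1.
Hypotheses (q_lt : (q.+2 <= N)%N) (r_bd : (0 < r < N)%N).

Lemma modpos_subn_window (d : 'I_q.+2) :
  modpos N (r%:Z - (d : nat)%:Z) = if (d < r)%N then (r - d)%N else (r + N - d)%N.
Proof. by rewrite modpos_subn //; have := ltn_ord d; lia. Qed.

Lemma mem_res_window (x : 'I_N) : (x \in res_window N q r) = cyc_window N q r x.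
Proof.
rewrite inE /cyc_window; have x_lt := ltn_ord x.
apply/existsP/idP => [[d]|win].
  by rewrite modpos_subn_window; have := ltn_ord d; case: ifP; lia.
pose d := if (x < r)%N then (r - x.+1)%N else (r + N - x.+1)%N.
have d_lt : (d < q.+2)%N by rewrite /d; case: ifP; lia.
exists (Ordinal d_lt); rewrite modpos_subn_window /= /d.
by case: (ltnP x r) => xr; case: ifP; lia.
Qed.

Lemma card_res_window : #|res_window N q r| = q.+2.
Proof.
pose g (d : 'I_q.+2) : 'I_N := inord (modpos N (r%:Z - (d : nat)%:Z)).-1.
have g_inj : injective g.
  move=> d1 d2 /(congr1 val); rewrite /g !modpos_subn_window /= => g12.
  apply: ord_inj; move: g12; have := ltn_ord d1; have := ltn_ord d2.
  by case: ifP => ?; case: ifP => ?; rewrite !inordK; lia.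
have -> : res_window N q r = g @: setT.
  apply/setP => u; rewrite inE.
  apply/existsP/imsetP => [[d /eqP ud]|[d _ ->]]; exists d => //.
    by rewrite /g -ud /= inord_val.
  have := ltn_ord d; rewrite /g modpos_subn_window inordK; case: ifP; lia.
by rewrite card_imset // cardsT card_ord.
Qed.

End ResidueWindow.

Theorem proposition2p14 (R : realDomainType) (n m : nat) :
  (2 <= n)%N -> (2 <= m)%N ->
  (* (i) *)
  (forall (q r : nat) (jn1 : 'I_n),
     jn1.+1 = n.-1 ->
     (1 <= r <= n.-1)%N ->
     (1 <= (n.-1) * q + r <= (n.-1) * (n - 2))%N ->
     Sk m (@A0 R n m) ((n.-1) * q + r) jn1 =
       [set u : 'I_n | [exists d : 'I_(q.+2), u.+1 == modpos n (r%:Z - (d : nat)%:Z)]]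
     /\ #|Sk m (@A0 R n m) ((n.-1) * q + r) jn1| = q.+2)
  /\
  (* (ii) *)
  (forall (t : nat) (jn1 jn : 'I_n),
     (0 < t)%N -> jn1.+1 = n.-1 -> jn.+1 = n ->
     (forall j : 'I_n, (1 <= j.+1 <= n - 2)%N ->
        Sk m (@A0 R n m) (t + (n.-1 - j.+1)) j = Sk m (@A0 R n m) t jn1)
     /\ Sk m (@A0 R n m) (t + n.-1) jn = Sk m (@A0 R n m) t jn1).
Proof.
move=> n_ge2 m_gt1; case: n n_ge2 => [|[|n']] // _.
have SkE k j : (0 < k)%N ->
    Sk m (@A0 R n'.+2 m) k j = [set u | walk (@mu1 _) k u j].
  exact: Sk_diag_tensor.
have penultE (j : 'I_n'.+2) : j.+1 = n'.+1 -> j = inord n'.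
  by move=> jE; apply/val_inj; rewrite /= inordK; lia.
split=> [q r jn1 /penultE -> r_bd /andP[k_gt0 k_le] | t jn1 jn t_gt0 /penultE -> jnE].
  have q_lt : (q.+2 < n'.+2)%N by nia.
  suff -> : Sk m (@A0 R n'.+2 m) (n'.+1 * q + r) (inord n') = res_window n'.+2 q r.
    by split=> //; apply: card_res_window; lia.
  rewrite SkE //; apply/setP => u; rewrite inE mem_res_window; [|lia|lia].
  by rewrite -reaches_penult_window ?ltn_ord // /reaches_penult inord_val.
split=> [j j_bd|].
  rewrite !SkE ?addn_gt0 ?t_gt0 //; apply/setP => u.
  by rewrite !inE walk_mu1_shift //=; lia.
have -> : jn = inord n'.+1 by apply/val_inj; rewrite /= inordK; lia.
rewrite !SkE ?addn_gt0 ?t_gt0 //; apply/setP => u.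
by rewrite !inE addnS walk_mu1Sr_last walk_mu1_shift // inordK.
Qed.
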